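(* Let $p \ge 2$, let $\beta_0,\beta_1,\dots,\beta_p \in \mathbb{R}$ with $\beta_j \neq 0$ for all $j\in\{1,\dots,p\}$, and consider the linear classifier $f:\mathbb{R}^p\to\{0,1\}$, $f(\boldsymbol{x}) = \mathbf{1}\big[\beta_0 + \sum_{j=1}^p \beta_j x_j > 0\big]$. Let $\tilde{\boldsymbol{x}}\in\mathbb{R}^p$ be a reference point with $f(\tilde{\boldsymbol{x}})=0$, and let $g^{\mathrm{ref}}(\boldsymbol{\beta}) = \beta_0 + \sum_{j=1}^p \beta_j \tilde{x}_j$ be the raw score at the reference. Then for every $k\in\{2,3,\dots,p\}$, the volume (Lebesgue measure) $V_k$ of the region $\{\boldsymbol{x}\in\mathbb{R}^p : f(\boldsymbol{x})=1,\ \mathrm{SEV}^+(\boldsymbol{x}) = k\}$ satisfies $$V_k = c_k \cdot \prod_{j=1}^p \left| \frac{g^{\mathrm{ref}}(\boldsymbol{\beta})}{\beta_j}\right|,$$ where $c_k$ is a finite constant that does not depend on $\beta_0,\beta_1,\dots,\beta_p$.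
   Context: For a classifier $f:\mathbb{R}^p\to\{0,1\}$, a reference $\tilde{\boldsymbol{x}}\in\mathbb{R}^p$ and a query $\boldsymbol{x}$ with $f(\boldsymbol{x})=1$, each Boolean vector $\boldsymbol{b}\in\{0,1\}^p$ determines the point $\boldsymbol{x}_{\boldsymbol{b}} := \boldsymbol{b}\odot \boldsymbol{x} + (\mathbf{1}-\boldsymbol{b})\odot\tilde{\boldsymbol{x}}$ (coordinate $j$ equals $x_j$ if $b_j=1$ and $\tilde{x}_j$ if $b_j=0$; $\odot$ is the coordinatewise product). The Sparse Explanation Value Plus of the query is $\mathrm{SEV}^+(\boldsymbol{x}) := \min\{\|\boldsymbol{b}\|_0 : \boldsymbol{b}\in\{0,1\}^p,\ f(\boldsymbol{x}_{\boldsymbol{b}})=1\}$, i.e. the minimum number of coordinates of the reference that must be replaced by the query's values to obtain a positive prediction. *)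

From HB Require Import structures.
From mathcomp Require Import all_boot all_order all_algebra.
From mathcomp Require Import all_classical reals ereal sequences.
Set Implicit Arguments. Unset Strict Implicit. Unset Printing Implicit Defensive.
Import Order.TTheory GRing.Theory Num.Theory.
Local Open Scope classical_set_scope.
Local Open Scope ring_scope.

Section defs.
Variable R : realType.
Variable p : nat.

Definition lin_score (b0 : R) (b : 'rV[R]_p) (x : 'rV[R]_p) : R :=
  b0 + \sum_(j < p) b 0 j * x 0 j.

Definition linclf (b0 : R) (b : 'rV[R]_p) (x : 'rV[R]_p) : bool :=
  0 < lin_score b0 b x.

Definition mixpt (bv : {ffun 'I_p -> bool}) (x xref : 'rV[R]_p) : 'rV[R]_p :=
  \row_(j < p) (if bv j then x 0 j else xref 0 j).

Definition l0 (bv : {ffun 'I_p -> bool}) : nat := #|[set j | bv j]|.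

(* SEV^+(x) = min { ||b||_0 : f(x_b) = 1 }; the default value p.+1 is only
   returned when no such b exists, which never happens when f x = 1 *)
Definition sev_plus (f : 'rV[R]_p -> bool) (xref x : 'rV[R]_p) : nat :=
  \big[minn/p.+1]_(bv : {ffun 'I_p -> bool} | f (mixpt bv x xref)) l0 bv.

Definition box (a c : 'rV[R]_p) : set 'rV[R]_p :=
  [set x | forall j, a 0 j <= x 0 j < c 0 j].

Definition boxvol (a c : 'rV[R]_p) : R := \prod_(j < p) (c 0 j - a 0 j).

Definition lebesgue_outer (S : set 'rV[R]_p) : \bar R :=
  ereal_inf [set s | exists (A C : nat -> 'rV[R]_p),
    [/\ forall n j, A n 0 j <= C n 0 j,
        S `<=` \bigcup_n box (A n) (C n) &
        s = (\sum_(n <oo) (boxvol (A n) (C n))%:E)%E]].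

End defs.

(* Let g be the score at the reference; g <= 0 since f x~ = 0.  If g = 0 the
   region is empty: f x = 1 forces some beta_j (x_j - x~_j) > 0, and then the
   single coordinate j already gives a positive prediction, so SEV+(x) = 1.
   If g < 0, the diagonal affine map x = x~ + s .* u with s_j = -g / beta_j
   turns the prediction at every mixed point x_b into 1[sum_(j in b) u_j > 1],
   the classifier with beta_0 = -1, beta = 1 and reference 0.  Hence the region
   is the image of the region U_k of this normalized problem, which does not
   depend on beta and is bounded (SEV+ >= 2 forces every u_j <= 1, and then
   sum_j u_j > 1 forces u_j > 1 - (p - 1)).  An affine map with diagonal s
   scales Lebesgue outer measure by prod_j |s_j| = prod_j |g / beta_j|, so
   c_k is the measure of U_k. *)

From HB Require Import structures.
From mathcomp Require Import all_boot all_order all_algebra.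
From mathcomp Require Import all_classical reals ereal sequences.
From mathcomp Require Import ring lra.
Import Order.TTheory GRing.Theory Num.Theory.
Local Open Scope classical_set_scope.
Local Open Scope ring_scope.

Section outer_measure.
Context {R : realType} {p : nat}.
Implicit Types (S : set 'rV[R]_p) (a c : 'rV[R]_p).

Lemma boxvol_ge0 a c : (forall j, a 0 j <= c 0 j) -> 0 <= boxvol a c.
Proof. by move=> ac; apply: prodr_ge0 => j _; rewrite subr_ge0. Qed.

Lemma lebesgue_outer_ge0 S : (0 <= lebesgue_outer S)%E.
Proof.
apply: le_ereal_inf_tmp => _ [A [C [A_le_C _ ->]]].
by apply: nneseries_ge0 => n _ _; rewrite lee_fin boxvol_ge0.
Qed.

Lemma lebesgue_outer_le_cover {S} {A C : nat -> 'rV[R]_p} :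
  (forall n j, A n 0 j <= C n 0 j) -> S `<=` \bigcup_n box (A n) (C n) ->
  (lebesgue_outer S <= \sum_(n <oo) (boxvol (A n) (C n))%:E)%E.
Proof. by move=> A_le_C SAC; apply: ereal_inf_lbound; exists A, C. Qed.

(* For p = 0 every box is the whole space, of volume 1, so even set0 has outer
   measure 1. *)
Hypothesis p_gt0 : (0 < p)%N.

Lemma boxvol00 : boxvol (0 : 'rV[R]_p) 0 = 0.
Proof.
rewrite /boxvol (eq_bigr (fun _ => 0)) => [|j _]; last by rewrite mxE subrr.
by rewrite prodr_const card_ord expr0n gtn_eqF.
Qed.

(* One box [a, c), followed by empty boxes [0, 0) of volume 0. *)
Lemma lebesgue_outer_le_boxvol {S a c} :
  (forall j, a 0 j <= c 0 j) -> S `<=` box a c ->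
  (lebesgue_outer S <= (boxvol a c)%:E)%E.
Proof.
move=> ac Sac; pose A n := if n == 0%N then a else 0.
pose C n := if n == 0%N then c else 0.
have A_le_C n j : A n 0 j <= C n 0 j by rewrite /A /C; case: eqP; rewrite ?mxE.
have SAC : S `<=` \bigcup_n box (A n) (C n) by move=> x /Sac Sx; exists 0%N.
apply: le_trans (lebesgue_outer_le_cover A_le_C SAC) _.
rewrite (nneseries_split 0 1) => [|n _]; last by rewrite lee_fin boxvol_ge0.
rewrite big_nat1 eseries0 ?adde0 // => n n_ge1 _.
by rewrite /A /C gtn_eqF // boxvol00.
Qed.

Lemma lebesgue_outer_set0 : lebesgue_outer (set0 : set 'rV[R]_p) = 0%E.
Proof.
apply/le_anti; rewrite lebesgue_outer_ge0 andbT.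
by rewrite -[0%E]/((0 : R)%:E) -boxvol00 lebesgue_outer_le_boxvol // => j; rewrite mxE.
Qed.

Lemma lebesgue_outer_bounded_fin {S a c} :
  (forall j, a 0 j <= c 0 j) -> S `<=` box a c -> exists r : R, lebesgue_outer S = r%:E.
Proof.
move=> ac /(lebesgue_outer_le_boxvol ac); have := lebesgue_outer_ge0 S.
by case: (lebesgue_outer S) => [r | |] // _ _; exists r.
Qed.

End outer_measure.

Section pow_limit.
Context {R : realType}.

Lemma expr1D_le_chord (d : R) (n : nat) :
  0 <= d <= 1 -> (1 + d) ^+ n <= 1 + (2 ^+ n - 1) * d.
Proof.
move=> /andP[d_ge0 d_le1]; elim: n => [|n IHn]; first by rewrite !expr0 subrr mul0r addr0.
have two_n_ge1 : 1 <= 2 ^+ n :> R by rewrite exprn_ege1 // ler1n.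
rewrite exprS; apply: le_trans (ler_wpM2l _ IHn) _; first lra.
have : 0 <= (2 ^+ n - 1) * d * (1 - d) by rewrite !mulr_ge0 // ?subr_ge0.
rewrite exprS; nra.
Qed.

Lemma le_of_le_expr1D_mul (n : nat) (x y : \bar R) : (0 <= y)%E ->
  (forall d : R, (0 < d)%R -> x <= ((1 + d) ^+ n)%:E * y)%E -> (x <= y)%E.
Proof.
case: y => [r | _ _ | //]; last exact: leey.
rewrite lee_fin => r_ge0; case: x => [z | /(_ 1 ltr01) | _]; last exact: leNye.
- move=> le_zr; rewrite lee_fin; apply/ler_addgt0Pr => e e_gt0.
  set K := (2 ^+ n - 1) * r.
  have K_ge0 : 0 <= K by rewrite mulr_ge0 // subr_ge0 exprn_ege1 // ler1n.
  have eK_gt0 : 0 < e + K by lra.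
  set d := e / (e + K).
  have d_gt0 : 0 < d by rewrite divr_gt0.
  have d_le1 : d <= 1 by rewrite ler_pdivrMr // mul1r; lra.
  have dK_le : d * K <= e by rewrite mulrAC ler_pdivrMr //; nra.
  have := le_zr d d_gt0; rewrite -EFinM lee_fin => /le_trans; apply.
  have chord : (1 + d) ^+ n <= 1 + (2 ^+ n - 1) * d.
    by apply: expr1D_le_chord; rewrite d_le1 ltW.
  have : (1 + d) ^+ n * r <= (1 + (2 ^+ n - 1) * d) * r by exact: ler_wpM2r.
  rewrite /K in dK_le; nra.
- by rewrite -EFinM leye_eq.
Qed.

End pow_limit.

Section affine.
Context {R : realType} {p : nat}.
Implicit Types (a s u x A C : 'rV[R]_p) (S : set 'rV[R]_p).

Definition affine a s u : 'rV[R]_p := \row_j (a 0 j + s 0 j * u 0 j).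

Definition affine_inv a s x : 'rV[R]_p := \row_j ((x 0 j - a 0 j) / s 0 j).

(* The image of the box [A, C) under [affine a s] is contained in the box
   [affine_lo, affine_hi d); the relative padding d > 0 is needed because for
   [s 0 j < 0] the image interval is open on the left. *)
Definition affine_lo a s A C : 'rV[R]_p :=
  \row_j (a 0 j + Num.min (s 0 j * A 0 j) (s 0 j * C 0 j)).

Definition affine_hi (d : R) a s A C : 'rV[R]_p :=
  \row_j (a 0 j + Num.max (s 0 j * A 0 j) (s 0 j * C 0 j)
          + d * `|s 0 j * A 0 j - s 0 j * C 0 j|).

Variables a s : 'rV[R]_p.
Hypothesis s_neq0 : forall j, s 0 j != 0.

Lemma affineK : cancel (affine a s) (affine_inv a s).
Proof.
move=> u; apply/rowP => j; rewrite !mxE.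
by field; rewrite s_neq0.
Qed.

Lemma affine_invK : cancel (affine_inv a s) (affine a s).
Proof.
move=> x; apply/rowP => j; rewrite !mxE.
by field; rewrite s_neq0.
Qed.

Lemma affine_invE :
  affine_inv a s = affine (\row_j (- a 0 j / s 0 j)) (\row_j (s 0 j)^-1).
Proof. by apply/funext => x; apply/rowP => j; rewrite !mxE; ring. Qed.

Lemma affine_hi_sub_lo d A C j : A 0 j <= C 0 j ->
  affine_hi d a s A C 0 j - affine_lo a s A C 0 j
  = (1 + d) * (`|s 0 j| * (C 0 j - A 0 j)).
Proof.
move=> A_le_C; rewrite !mxE -[C 0 j - A 0 j]ger0_norm ?subr_ge0 // -normrM mulrBr.
by case: (lerP (s 0 j * A 0 j) (s 0 j * C 0 j)) => _; ring.
Qed.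

Lemma affine_box d A C u : 0 < d -> box A C u ->
  box (affine_lo a s A C) (affine_hi d a s A C) (affine a s u).
Proof.
move=> d_gt0 ACu j; have /andP[Au uC] := ACu j; rewrite !mxE.
have pad_gt0 : 0 < d * `|s 0 j * A 0 j - s 0 j * C 0 j|.
  rewrite mulr_gt0 // normr_gt0 -mulrBr mulf_neq0 // subr_eq0.
  by rewrite lt_eqF // (le_lt_trans Au uC).
suff : Num.min (s 0 j * A 0 j) (s 0 j * C 0 j) <= s 0 j * u 0 j
       <= Num.max (s 0 j * A 0 j) (s 0 j * C 0 j).
  by move=> /andP[? ?]; apply/andP; split; lra.
rewrite ge_min le_max; have := s_neq0 j; rewrite neq_lt => /orP[s_lt0 | s_gt0].
- by rewrite !ler_nM2l // (ltW uC) Au orbT.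
- by rewrite !ler_pM2l // (ltW uC) Au orbT.
Qed.

Lemma affine_boxvol d A C : (forall j, A 0 j <= C 0 j) ->
  boxvol (affine_lo a s A C) (affine_hi d a s A C)
  = (1 + d) ^+ p * \prod_(j < p) `|s 0 j| * boxvol A C.
Proof.
move=> A_le_C; rewrite /boxvol (eq_bigr _ (fun j _ => affine_hi_sub_lo d A C j (A_le_C j))).
by rewrite !big_split /= prodr_const card_ord mulrA.
Qed.

Lemma lebesgue_outer_affine_pad d S : 0 < d ->
  (lebesgue_outer (affine a s @` S)
   <= ((1 + d) ^+ p)%:E * ((\prod_(j < p) `|s 0 j|)%:E * lebesgue_outer S))%E.
Proof.
move=> d_gt0; have c_gt0 : 0 < (1 + d) ^+ p * \prod_(j < p) `|s 0 j|.
  rewrite mulr_gt0 ?exprn_gt0 ?prodr_gt0 // => [|j _]; [lra | by rewrite normr_gt0].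
rewrite muleA -EFinM [X in (_ <= _ * X)%E]/lebesgue_outer -ereal_inf_pZl //.
apply: le_ereal_inf_tmp => _ [_ [A [C [A_le_C SAC ->]]] <-].
have ACpad n j : affine_lo a s (A n) (C n) 0 j <= affine_hi d a s (A n) (C n) 0 j.
  by rewrite -subr_ge0 affine_hi_sub_lo // !mulr_ge0 ?subr_ge0 //; lra.
have cover : affine a s @` S
             `<=` \bigcup_n box (affine_lo a s (A n) (C n)) (affine_hi d a s (A n) (C n)).
  by move=> _ [u /SAC [n _ ACu] <-]; exists n => //; apply: affine_box.
apply: le_trans (lebesgue_outer_le_cover ACpad cover) _.
rewrite -nneseriesZl => [|n _]; last by rewrite lee_fin boxvol_ge0.
by under eq_eseriesr do rewrite affine_boxvol // EFinM.
Qed.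

Lemma lebesgue_outer_affine_le S :
  (lebesgue_outer (affine a s @` S)
   <= (\prod_(j < p) `|s 0 j|)%:E * lebesgue_outer S)%E.
Proof.
apply: (@le_of_le_expr1D_mul _ p); last by move=> d; apply: lebesgue_outer_affine_pad.
by rewrite mule_ge0 ?lebesgue_outer_ge0 // lee_fin prodr_ge0.
Qed.

End affine.

Lemma lebesgue_outer_affine {R : realType} {p : nat} (a s : 'rV[R]_p) S :
  (forall j, s 0 j != 0) ->
  lebesgue_outer (affine a s @` S) = ((\prod_(j < p) `|s 0 j|)%:E * lebesgue_outer S)%E.
Proof.
move=> s_neq0; set P := \prod_(j < p) `|s 0 j|.
have P_gt0 : 0 < P by apply: prodr_gt0 => j _; rewrite normr_gt0.
apply/le_anti; rewrite lebesgue_outer_affine_le //=.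
have sV_neq0 j : (\row_j (s 0 j)^-1) 0 j != 0 by rewrite mxE invr_neq0.
have := lebesgue_outer_affine_le (\row_j (- a 0 j / s 0 j)) _ sV_neq0 (affine a s @` S).
rewrite -affine_invE image_comp (_ : _ \o _ = id) ?image_id; last exact/funext/affineK.
have -> : \prod_(j < p) `|(\row_j (s 0 j)^-1) 0 j| = P^-1.
  by rewrite -prodfV; apply: eq_bigr => j _; rewrite mxE normfV.
by rewrite lee_pdivlMl.
Qed.

Section sev.
Context {R : realType} {p : nat}.
Implicit Types (f F : 'rV[R]_p -> bool) (a s x u xr : 'rV[R]_p) (k : nat) (bv : {ffun 'I_p -> bool}).

Definition sev_region f xr k : set 'rV[R]_p := [set x | f x /\ sev_plus f xr x = k].

Definition single (j : 'I_p) : {ffun 'I_p -> bool} := [ffun i => i == j].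

Lemma l0_single j : l0 (single j) = 1%N.
Proof.
rewrite /l0 -(cards1 j); apply: eq_card => i.
by rewrite inE; apply/asboolP/idP => /=; rewrite ffunE.
Qed.

Lemma sev_plus_le_l0 f xr x bv : f (mixpt bv x xr) -> (sev_plus f xr x <= l0 bv)%N.
Proof. exact: (@bigmin_le_cond _ nat). Qed.

Lemma sev_plus_gt1_single {f xr x} j :
  (1 < sev_plus f xr x)%N -> ~~ f (mixpt (single j) x xr).
Proof.
by move=> sev_gt1; apply/negP => /sev_plus_le_l0; rewrite l0_single leqNgt sev_gt1.
Qed.

Lemma mixpt_setT x xr : mixpt [ffun=> true] x xr = x.
Proof. by apply/rowP => j; rewrite !mxE ffunE. Qed.

Lemma lin_score_mixpt (b0 : R) (b : 'rV[R]_p) x xr bv :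
  lin_score b0 b (mixpt bv x xr)
  = lin_score b0 b xr + \sum_(j < p) (if bv j then b 0 j * (x 0 j - xr 0 j) else 0).
Proof.
rewrite /lin_score -addrA -big_split; congr (_ + _); apply: eq_bigr => j _.
by rewrite !mxE; case: (bv j) => /=; ring.
Qed.

Lemma lin_score_single (b0 : R) (b : 'rV[R]_p) x xr j :
  lin_score b0 b (mixpt (single j) x xr) = lin_score b0 b xr + b 0 j * (x 0 j - xr 0 j).
Proof.
rewrite lin_score_mixpt -big_mkcond /=.
by rewrite (eq_bigl (pred1 j)) ?big_pred1_eq // => i; rewrite ffunE.
Qed.

Lemma sev_region_score0 (b0 : R) (b : 'rV[R]_p) xr k :
  lin_score b0 b xr = 0 -> (1 < k)%N -> sev_region (linclf b0 b) xr k = set0.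
Proof.
move=> score0 k_gt1; apply/seteqP; split => [x [pos sev_k] | //].
move: k_gt1; rewrite -sev_k => sev_gt1.
have single_le0 j : b 0 j * (x 0 j - xr 0 j) <= 0.
  have := sev_plus_gt1_single j sev_gt1.
  by rewrite /linclf lin_score_single score0 add0r -leNgt.
move: pos; rewrite /linclf -(mixpt_setT x xr) lin_score_mixpt score0 add0r.
rewrite ltNge => /negP; apply; apply: sumr_le0 => j _.
by rewrite ffunE single_le0.
Qed.

Lemma mixpt_affine a s u bv : mixpt bv (affine a s u) a = affine a s (mixpt bv u 0).
Proof. by apply/rowP => j; rewrite !mxE; case: (bv j); rewrite ?mulr0 ?addr0. Qed.

Lemma sev_region_affine {f F a s k} : (forall j, s 0 j != 0) ->
  (forall v, f (affine a s v) = F v) ->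
  sev_region f a k = affine a s @` sev_region F 0 k.
Proof.
move=> s_neq0 fF.
have region_affine u : sev_region f a k (affine a s u) <-> sev_region F 0 k u.
  rewrite /sev_region /= fF; suff -> : sev_plus f a (affine a s u) = sev_plus F 0 u by [].
  by apply: eq_bigl => bv; rewrite mixpt_affine fF.
apply/seteqP; split => [x | _ [u /region_affine region_u <-] //].
by rewrite -[x](affine_invK a s s_neq0) => /region_affine; exists (affine_inv a s x).
Qed.

Lemma lin_score_std u : lin_score (-1) (const_mx 1) u = \sum_(j < p) u 0 j - 1.
Proof. by rewrite /lin_score addrC; congr (_ - _); apply: eq_bigr => j _; rewrite mxE mul1r. Qed.

Lemma sev_region_std_box k : (1 < k)%N ->
  sev_region (linclf (-1) (const_mx 1)) 0 k `<=` box (const_mx (- p%:R)) (const_mx 2).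
Proof.
move=> k_gt1 u [pos sev_k] j; rewrite !mxE; move: k_gt1; rewrite -sev_k => sev_gt1.
have u_le1 i : u 0 i <= 1.
  have := sev_plus_gt1_single i sev_gt1.
  by rewrite /linclf lin_score_single lin_score_std big1 => [|l _]; rewrite !mxE; lra.
have rest_le : \sum_(i < p | i != j) u 0 i <= p%:R.
  apply: le_trans (ler_sum _ (fun i _ => u_le1 i)) _.
  by rewrite sumr_const ler_nat (leq_trans (max_card _)) ?card_ord.
move: pos; rewrite /linclf lin_score_std (bigD1 j) //=.
by have := u_le1 j; lra.
Qed.

Lemma linclf_affine_std {b0 : R} {b : 'rV[R]_p} {xr} v :
  (forall j, b 0 j != 0) -> lin_score b0 b xr < 0 ->
  linclf b0 b (affine xr (\row_j (- lin_score b0 b xr / b 0 j)) v)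
  = linclf (-1) (const_mx 1) v.
Proof.
move=> b_neq0; set g := lin_score b0 b xr => g_lt0; rewrite /linclf.
have -> : lin_score b0 b (affine xr (\row_j (- g / b 0 j)) v)
          = - g * lin_score (-1) (const_mx 1) v.
  rewrite lin_score_std mulrBr mulr1 opprK mulr_sumr addrC /lin_score -addrA -big_split.
  congr (_ + _); apply: eq_bigr => j _; rewrite !mxE /=.
  by field; rewrite b_neq0.
by rewrite pmulr_rgt0 // oppr_gt0.
Qed.

End sev.

Theorem theorem4p1 (R : realType) (p k : nat) :
  (2 <= p)%N -> (2 <= k <= p)%N ->
  exists c : R, forall (b0 : R) (b xref : 'rV[R]_p),
    (forall j : 'I_p, b 0 j != 0) ->
    ~~ linclf b0 b xref ->
    lebesgue_outer
      [set x | linclf b0 b x /\ sev_plus (linclf b0 b) xref x = k] =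
    (c * \prod_(j < p) `| lin_score b0 b xref / b 0 j |)%:E.
Proof.
move=> p_ge2 /andP[k_ge2 _]; have p_gt0 : (0 < p)%N by apply: leq_trans p_ge2.
have std_box_le (j : 'I_p) : (const_mx (- p%:R) : 'rV[R]_p) 0 j <= (const_mx 2 : 'rV[R]_p) 0 j.
  by rewrite !mxE; apply: le_trans (_ : 0 <= 2) => //; rewrite oppr_le0.
have [c std_c] := lebesgue_outer_bounded_fin p_gt0 std_box_le (sev_region_std_box k k_ge2).
exists c => b0 b xref b_neq0 ref_neg.
rewrite -/(sev_region (linclf b0 b) xref k).
have : lin_score b0 b xref <= 0 by rewrite leNgt.
rewrite le_eqVlt => /orP[/eqP score0 | score_lt0].
- rewrite sev_region_score0 // lebesgue_outer_set0 // score0.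
  under eq_bigr do rewrite mul0r normr0.
  by rewrite prodr_const card_ord expr0n gtn_eqF // mulr0.
- set s : 'rV[R]_p := \row_j (- lin_score b0 b xref / b 0 j).
  have s_neq0 j : s 0 j != 0.
    by rewrite mxE mulf_neq0 ?invr_eq0 // oppr_eq0 lt_eqF.
  rewrite (sev_region_affine s_neq0 (fun v => linclf_affine_std v b_neq0 score_lt0)).
  rewrite lebesgue_outer_affine // std_c -EFinM mulrC.
  by congr (_ * _)%:E; apply: eq_bigr => j _; rewrite mxE mulNr normrN.
Qed.
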